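(* Let $n\ge 2$, $\rho>0$ and $\omega\in S^{n-1}$. Let $P(\tau,\xi) = -\tau^2 + \xi\cdot\xi + i\tau\,\xi\cdot\xi$ for $(\tau,\xi)\in\mathbb{C}\times\mathbb{C}^n$, $\zeta^o = (-i\rho^2, i\rho\omega)$, $P_o(\zeta) = P(\zeta+\zeta^o)$ and $N = (1,0,\ldots,0)\in\mathbb{R}\times\mathbb{R}^n$. Suppose $\sigma(\zeta)$ is a solution of $P_o(\zeta+\sigma N) = 0$, $\zeta = (\tau,\xi)\in\mathbb{C}\times\mathbb{C}^n$, which is analytic and single-valued in a ball $B\subset\mathbb{C}\times\mathbb{C}^n$ with real center and radius $1$. Then $\sup_{\zeta\in B}\operatorname{Im}\sigma(\zeta)\ge 0$. *)

From mathcomp Require Import all_boot all_algebra complex.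
From mathcomp Require Import all_classical all_reals ereal.
Import GRing.Theory Num.Theory.
Local Open Scope ring_scope.
Local Open Scope complex_scope.
Local Open Scope classical_set_scope.

Set Implicit Arguments. Unset Strict Implicit. Unset Printing Implicit Defensive.

Definition cmono (R : realType) (m : nat) (z z0 : 'I_m -> R[i]) (a : 'I_m -> nat)
  : R[i] := \prod_(i < m) (z i - z0 i) ^+ a i.

Definition box_sum (R : realType) (m : nat) (c : ('I_m -> nat) -> R[i])
  (z0 z : 'I_m -> R[i]) (K : nat) : R[i] :=
  \sum_(a : {ffun 'I_m -> 'I_K}) c (fun i => nat_of_ord (a i)) * cmono z z0 (fun i => nat_of_ord (a i)).

Definition box_abs_sum (R : realType) (m : nat) (c : ('I_m -> nat) -> R[i])
  (z0 z : 'I_m -> R[i]) (K : nat) : R[i] :=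
  \sum_(a : {ffun 'I_m -> 'I_K}) `|c (fun i => nat_of_ord (a i))| * `|cmono z z0 (fun i => nat_of_ord (a i))|.

(* f is given near z0 (inside D) by an absolutely convergent power series
   sum_a c_a (z - z0)^a on some polydisc of radius r > 0 *)
Definition power_series_at (R : realType) (m : nat) (D : set ('I_m -> R[i]))
  (f : ('I_m -> R[i]) -> R[i]) (z0 : 'I_m -> R[i]) : Prop :=
  exists (c : ('I_m -> nat) -> R[i]) (r : R), 0 < r /\
    forall z, D z -> (forall i, `|z i - z0 i| < r%:C) ->
      (exists M : R, forall K, box_abs_sum c z0 z K <= M%:C) /\
      (forall e : R, 0 < e -> exists K0 : nat, forall K, (K0 <= K)%N ->
          `|box_sum c z0 z K - f z| < e%:C).

(* f is (complex-)analytic (and single-valued, being a function) on D *)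
Definition analytic_on (R : realType) (m : nat) (D : set ('I_m -> R[i]))
  (f : ('I_m -> R[i]) -> R[i]) : Prop :=
  forall z0, D z0 -> power_series_at D f z0.

Definition ball1 (R : realType) (m : nat) (c : 'I_m -> R) : set ('I_m -> R[i]) :=
  [set z | \sum_(i < m) `|z i - (c i)%:C| ^+ 2 < 1].

(* bilinear (non-Hermitian) dot product xi . xi *)
Definition cdot (R : realType) (n : nat) (x y : 'I_n -> R[i]) : R[i] :=
  \sum_(j < n) x j * y j.

(* P(tau, xi) = - tau^2 + xi.xi + i tau xi.xi ;  zeta = (tau, xi) is encoded as
   z : 'I_n.+1 -> R[i] with tau = z 0 and xi_j = z (j+1) *)
Definition Pop (R : realType) (n : nat) (tau : R[i]) (xi : 'I_n -> R[i]) : R[i] :=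
  - tau ^+ 2 + cdot xi xi + 'i * tau * cdot xi xi.

Definition Ptot (R : realType) (n : nat) (z : 'I_n.+1 -> R[i]) : R[i] :=
  Pop (z ord0) (fun j => z (lift ord0 j)).

Definition zeta_o (R : realType) (n : nat) (rho : R) (omega : 'I_n -> R)
  : 'I_n.+1 -> R[i] :=
  fun k => match unlift ord0 k with
           | None => - 'i * (rho ^+ 2)%:C
           | Some j => 'i * (rho * omega j)%:C
           end.

Definition P_o (R : realType) (n : nat) (rho : R) (omega : 'I_n -> R)
  (z : 'I_n.+1 -> R[i]) : R[i] :=
  Ptot (fun k => z k + zeta_o rho omega k).

Definition Ndir (R : realType) (n : nat) : 'I_n.+1 -> R[i] :=
  fun k => if k == ord0 then 1 else 0.

From mathcomp Require Import all_boot all_algebra complex.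
From mathcomp Require Import all_classical all_reals ereal.
From mathcomp Require Import all_order ring lra.
Import Order.TTheory GRing.Theory Num.Theory.
Local Open Scope ring_scope.
Local Open Scope complex_scope.
Local Open Scope classical_set_scope.

Set Implicit Arguments.
Unset Strict Implicit.
Unset Printing Implicit Defensive.

(* On the complex line z_s = c - i s N through the center, the equation does not
   depend on s: T = tau + sigma - i rho^2 must be a root of the fixed quadratic
   T^2 - i q T - q = 0, where q = xi.xi with xi = c' + i rho omega, so that
   Re q >= -rho^2.  Writing W = -i T - 1 the quadratic reads q W = (W + 1)^2,
   which forces Im T > -rho^2 - 1 for both roots.  Since
   Im sigma(z_s) = Im T + s + rho^2, taking s close enough to 1 gives
   Im sigma(z_s) >= 0. *)

Lemma quadratic_root_cases (R : idomainType) (s p x y : R) :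
  x ^+ 2 - s * x + p = 0 -> y ^+ 2 - s * y + p = 0 -> y = x \/ y = s - x.
Proof.
move=> hx hy.
have : (y - x) * (y - (s - x)) = (y ^+ 2 - s * y + p) - (x ^+ 2 - s * x + p).
  by ring.
rewrite hx hy subrr => /eqP; rewrite mulf_eq0 !subr_eq0.
by case/orP=> /eqP; [left | right].
Qed.

Lemma Im_root_gt (R : rcfType) (q T : R[i]) :
  T ^+ 2 - 'i * q * T - q = 0 -> Num.min (complex.Re q) 1 - 1 < complex.Im T.
Proof.
case: T q => x y [A B] E /=; rewrite ltrBlDr gt_min.
case: (ltP y 1) => [y_lt1 | y_ge1]; last by rewrite orbC ltrDr (lt_le_trans ltr01 y_ge1).
have /= ReE := congr1 (@complex.Re R) E.
have /= ImE := congr1 (@complex.Im R) E.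
(* With W := y - 1 - i x = -i T - 1 the equation reads q W = (W + 1)^2;
   its real part after multiplying by conj W is the identity below. *)
have key : (A - y - 1) * ((y - 1) ^+ 2 + x ^+ 2) = y - 1.
  have -> : (A - y - 1) * ((y - 1) ^+ 2 + x ^+ 2) =
      (y - 1) * (x ^+ 2 - y ^+ 2 + A * y + B * x - A)
      - x * (2 * x * y - A * x + B * y - B) + (y - 1) by ring.
  have -> : x ^+ 2 - y ^+ 2 + A * y + B * x - A = 0 by rewrite -ReE; ring.
  have -> : 2 * x * y - A * x + B * y - B = 0 by rewrite -ImE; ring.
  by rewrite !mulr0 subr0 add0r.
apply/orP; left; rewrite ltNge; apply/negP => hA.
have : 0 <= (A - y - 1) * ((y - 1) ^+ 2 + x ^+ 2).
  by apply: mulr_ge0; [lra | apply: addr_ge0; apply: sqr_ge0].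
lra.
Qed.

Section AlongN.
Variables (R : realType) (n : nat).
Local Notation N := (@Ndir R n).

Lemma Ndir0 : N ord0 = 1.
Proof. by rewrite /Ndir eqxx. Qed.

Lemma Ndir_lift (j : 'I_n) : N (lift ord0 j) = 0.
Proof. by rewrite /Ndir eq_sym (negbTE (neq_lift ord0 j)). Qed.

Lemma Re_cdot_self (xi : 'I_n -> R[i]) :
  complex.Re (cdot xi xi) =
  \sum_(j < n) complex.Re (xi j) ^+ 2 - \sum_(j < n) complex.Im (xi j) ^+ 2.
Proof.
rewrite /cdot; elim/big_rec3: _ => [|j u v w _ IH]; first by rewrite subrr.
move: IH; case: w (xi j) => a b [x y] /= ->; ring.
Qed.

Lemma PopE (T : R[i]) (xi : 'I_n -> R[i]) :
  Pop T xi = - (T ^+ 2 - 'i * cdot xi xi * T - cdot xi xi).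
Proof. by rewrite /Pop; ring. Qed.

Lemma P_o_addN (rho : R) (omega : 'I_n -> R) (z : 'I_n.+1 -> R[i]) (w : R[i]) :
  P_o rho omega (fun k => z k + w * N k) =
  Pop (z ord0 + w - 'i * (rho ^+ 2)%:C)
      (fun j => z (lift ord0 j) + 'i * (rho * omega j)%:C).
Proof.
rewrite /P_o /Ptot /zeta_o unlift_none Ndir0 mulr1 mulNr.
by congr Pop; apply/funext => j; rewrite liftK Ndir_lift mulr0 addr0.
Qed.

Lemma ball1_addN (c : 'I_n.+1 -> R) (w : R[i]) :
  `|w| < 1 -> ball1 c (fun k => (c k)%:C + w * N k).
Proof.
move=> w_lt1; rewrite /ball1 /= big_ord_recl big1 => [|j _]; last first.
  by rewrite Ndir_lift mulr0 addr0 subrr normr0 expr0n.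
rewrite Ndir0 mulr1 addr0 addrC addKr.
by rewrite expr_lt1 // normr_ge0.
Qed.

End AlongN.

Section RootAlongN.
Variables (R : realType) (n : nat) (rho : R) (omega : 'I_n -> R).
Hypothesis homega : \sum_(j < n) omega j ^+ 2 = 1.
Variables (c : 'I_n.+1 -> R) (sigma : ('I_n.+1 -> R[i]) -> R[i]).
Hypothesis hsol : forall z, ball1 c z ->
  P_o rho omega (fun k => z k + sigma z * @Ndir R n k) = 0.

Let xi j := (c (lift ord0 j))%:C + 'i * (rho * omega j)%:C.
Let q := cdot xi xi.
Let z (s : R) k := (c k)%:C + - 'i * s%:C * @Ndir R n k.
Let T (s : R) := z s ord0 + sigma (z s) - 'i * (rho ^+ 2)%:C.

Let z_ball s : 0 <= s < 1 -> ball1 c (z s).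
Proof.
case/andP=> s_ge0 s_lt1; apply: ball1_addN.
by rewrite normrM normrN normCi mul1r ger0_norm ?ler0c // ltcR.
Qed.

Let T_root s : 0 <= s < 1 -> T s ^+ 2 - 'i * q * T s - q = 0.
Proof.
move=> s01; apply/eqP; rewrite -oppr_eq0 -PopE.
rewrite -(hsol (z_ball s01)) P_o_addN; apply/eqP; congr Pop.
by apply/funext => j; rewrite /z Ndir_lift mulr0 addr0.
Qed.

Let Im_T s : complex.Im (T s) = complex.Im (sigma (z s)) - s - rho ^+ 2.
Proof. by rewrite /T /z Ndir0 mulr1; case: (sigma _) => a b /=; ring. Qed.

Let Im_root_gt_rho U :
  U ^+ 2 - 'i * q * U - q = 0 -> - rho ^+ 2 - 1 < complex.Im U.
Proof.
have Im_xi : \sum_(j < n) complex.Im (xi j) ^+ 2 = rho ^+ 2.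
  rewrite -[RHS]mulr1 -homega mulr_sumr.
  by apply: eq_bigr => j _; rewrite /xi /=; ring.
have : 0 <= \sum_(j < n) complex.Re (xi j) ^+ 2.
  by apply: sumr_ge0 => j _; apply: sqr_ge0.
rewrite -(lerD2r (- \sum_(j < n) complex.Im (xi j) ^+ 2)) add0r -Re_cdot_self Im_xi.
move=> Re_q /Im_root_gt; apply: le_lt_trans; rewrite lerD2r le_min Re_q.
by rewrite (le_trans _ ler01) // oppr_le0 sqr_ge0.
Qed.

Lemma exists_ball1_Im_ge0 : exists2 z, ball1 c z & 0 <= complex.Im (sigma z).
Proof.
have T0_root : T 0 ^+ 2 - 'i * q * T 0 - q = 0 by apply: T_root; rewrite lexx ltr01.
pose T1 := 'i * q - T 0.
have T1_root : T1 ^+ 2 - 'i * q * T1 - q = 0 by rewrite -[RHS]T0_root /T1; ring.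
(* T s is T 0 or T1 for every s, so s must compensate for both roots. *)
pose s := Num.max 0 (Num.max (- complex.Im (T 0) - rho ^+ 2) (- complex.Im T1 - rho ^+ 2)).
have s01 : 0 <= s < 1.
  have := Im_root_gt_rho T0_root; have := Im_root_gt_rho T1_root.
  by rewrite le_max lexx /= !gt_max ltr01 /= => ? ?; apply/andP; split; lra.
exists (z s); first exact: z_ball.
have : - complex.Im (T 0) - rho ^+ 2 <= s by rewrite !le_max lexx orbT.
have : - complex.Im T1 - rho ^+ 2 <= s by rewrite !le_max lexx !orbT.
have := Im_T s.
by case: (quadratic_root_cases T0_root (T_root s01)) => ->; rewrite -/T1; lra.
Qed.

End RootAlongN.

Theorem lemma1 (R : realType) (n : nat) (hn : (2 <= n)%N)
  (rho : R) (hrho : 0 < rho)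
  (omega : 'I_n -> R) (homega : \sum_(j < n) omega j ^+ 2 = 1)
  (c : 'I_n.+1 -> R)
  (sigma : ('I_n.+1 -> R[i]) -> R[i])
  (hsol : forall z, ball1 c z ->
            P_o rho omega (fun k => z k + sigma z * @Ndir R n k) = 0)
  (han : analytic_on (ball1 c) sigma) :
  (0 <= ereal_sup [set (complex.Im (sigma z))%:E | z in ball1 c])%E.
Proof.
have [z z_ball Im_ge0] := exists_ball1_Im_ge0 homega hsol.
apply: le_trans (ereal_sup_ubound _); last by exists z.
by rewrite lee_fin.
Qed.
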